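(* Let $G$ be an abelian group and $A\subseteq G$ a finite set with at least $2$ elements. Then, for each choice of sign, $$\sum_{s\neq 0} |A\pm A_s| \ge 2^{-1} |A|^6 \mathsf{E}_3(A)^{-1} \quad\text{and}\quad \sum_{s\neq 0} \sum_{t\neq 0} |A_s\pm A_t| \ge 4^{-1} |A|^8 \mathsf{E}_4(A)^{-1},$$ where the sums range over $s,t\in (A-A)\setminus\{0\}$. In particular, there exists $s\neq 0$ with $|A-A_s| \ge 2^{-1}|A|^6\mathsf{E}_3(A)^{-1}|A-A|^{-1}$, and there exist $s,t\neq 0$ with $|A_s-A_t| \ge 4^{-1}|A|^8\mathsf{E}_4(A)^{-1}|A-A|^{-2}$.
   Context: For finite $A\subseteq G$, $(A\circ A)(x)=|\{y: y\in A,\ y+x\in A\}|$; for $s\in G$, $A_s=A\cap(A-s)$. $\mathsf{E}_3(A)=\sum_s (A\circ A)(s)^3$ and $\mathsf{E}_4(A)=\sum_s (A\circ A)(s)^4$. $X\pm Y$ denotes $\{x\pm y: x\in X, y\in Y\}$. *)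

From HB Require Import structures.
From mathcomp Require Import all_boot all_order all_algebra.
From mathcomp Require Import finmap.
Set Implicit Arguments. Unset Strict Implicit. Unset Printing Implicit Defensive.
Import Order.TTheory GRing.Theory Num.Theory.
Local Open Scope fset_scope.
Local Open Scope ring_scope.

Section Defs.
Variable G : zmodType.
Implicit Types (A X Y : {fset G}) (s x : G).

Definition sumset X Y : {fset G} := [fset x + y | x in X, y in Y].
Definition diffset X Y : {fset G} := [fset x - y | x in X, y in Y].

Definition Ash A s : {fset G} := [fset y in A | y + s \in A].

Definition conv A x : nat := #|` Ash A x|.

(* E_3(A) = sum_s (A∘A)(s)^3 ; (A∘A)(s) = 0 outside A - A, so the sum
   over all s in G equals the finite sum over s in A - A. *)
Definition E3 A : nat := (\sum_(s <- diffset A A) conv A s ^ 3)%N.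
Definition E4 A : nat := (\sum_(s <- diffset A A) conv A s ^ 4)%N.

Definition nzdiff A : {fset G} := diffset A A `\ 0.
End Defs.

From HB Require Import structures.
From mathcomp Require Import all_boot all_order all_algebra.
From mathcomp Require Import finmap zify.
Set Implicit Arguments. Unset Strict Implicit. Unset Printing Implicit Defensive.
Import Order.TTheory GRing.Theory Num.Theory.
Local Open Scope fset_scope.

(* For finite X, Y contained in A, Cauchy-Schwarz gives
   (|X| |Y|)^2 <= |X +- Y| * sum_d |X_d| |Y_d|, the sum counting the solutions of
   x' - x = y' - y.  For X = A, Y = A_s we have (A_s)_d = (A_d)_s, so summing over
   s <> 0 turns the right-hand side into sum_d |A_d| (|A_d|^2 - |A_d|), which is at
   most (1 - 1/|A|) E_3(A), while sum_(s <> 0) |A_s| = |A|^2 - |A|; a second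
   Cauchy-Schwarz over s gives the E_3 bound.  X = A_s, Y = A_t with a double sum
   over s, t gives the E_4 bound in the same way, and the existence statements
   follow by averaging over at most |A - A| (resp. |A - A|^2) terms. *)

Lemma leq_sum_sq_mul (I : Type) (r : seq I) (c S e : I -> nat) :
  (forall i, c i ^ 2 <= S i * e i) ->
  (\sum_(i <- r) c i) ^ 2 <= (\sum_(i <- r) S i) * (\sum_(i <- r) e i).
Proof.
move=> cSe.
have cross i j : 2 * (c i * c j) <= S i * e j + S j * e i.
  rewrite -(@leq_exp2r _ _ 2) // (leq_trans _ (nat_AGM2 _ _)) //.
  rewrite expnMn mulnA -[2 ^ 2]/4 -mulnA leq_mul2l /= expnMn.
  by rewrite mulnACA (mulnC (e j)) mulnACA leq_mul.
rewrite -(@leq_pmul2l 2) // expnS expn1 big_distrlr big_distrr /=.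
apply: (@leq_trans (\sum_(i <- r) \sum_(j <- r) (S i * e j + S j * e i))).
  by apply: leq_sum => i _; rewrite big_distrr; apply: leq_sum => j _; apply: cross.
under eq_bigr do rewrite big_split /=.
by rewrite big_split /= [X in (_ + X)%N]exchange_big -!big_distrlr addnn mul2n.
Qed.

Section FsetCounting.
Variable T : choiceType.
Implicit Types (D X : {fset T}) (w : T) (F : T -> nat).

Lemma sum_eq_mul D w F : \sum_(s <- D) (s == w) * F s = (w \in D) * F w.
Proof.
have [wD | wND] := boolP (w \in D).
  rewrite (big_fsetD1 w) //= eqxx big1_seq ?addn0 // => s /andP[_].
  by rewrite in_fsetD1 => /andP[/negbTE -> _].
by rewrite big1_seq // => s /andP[_ sD]; case: eqP sD wND => // -> ->.
Qed.

Lemma sum_eq_mem X w : \sum_(x <- X) (x == w) = (w \in X).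
Proof. by rewrite -[RHS]muln1 -sum_eq_mul; apply: eq_bigr => x _; rewrite muln1. Qed.

Lemma card_imfset2_sq_le (T1 T2 : choiceType) (f : T1 -> T2 -> T)
    (X : {fset T1}) (Y : {fset T2}) :
  (#|` X| * #|` Y|) ^ 2 <= #|` [fset f x y | x in X, y in Y]| *
    \sum_(x <- X) \sum_(x' <- X) \sum_(y <- Y) \sum_(y' <- Y) (f x y == f x' y').
Proof.
set Z := [fset f x y | x in X, y in Y].
pose rep z := \sum_(x <- X) \sum_(y <- Y) (f x y == z).
have fXY x y : x \in X -> y \in Y -> f x y \in Z by move=> xX yY; apply: in_imfset2.
have sum_rep : \sum_(z <- Z) rep z = #|` X| * #|` Y|.
  rewrite exchange_big [#|` X|]card_fset_sum1 big_distrl /=.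
  apply: eq_big_seq => x xX; rewrite mul1n exchange_big card_fset_sum1 /=.
  apply: eq_big_seq => y yY.
  by under eq_bigr do rewrite eq_sym; rewrite sum_eq_mem fXY.
have sum_rep_sq : \sum_(z <- Z) rep z ^ 2 =
    \sum_(x <- X) \sum_(x' <- X) \sum_(y <- Y) \sum_(y' <- Y) (f x y == f x' y').
  transitivity (\sum_(z <- Z) \sum_(x <- X) \sum_(x' <- X) \sum_(y <- Y) \sum_(y' <- Y)
       ((f x y == z) * (f x' y' == z))).
    apply: eq_bigr => z _; rewrite expnS expn1 big_distrlr; apply: eq_bigr => x _.
    by apply: eq_bigr => x' _; rewrite big_distrlr.
  rewrite exchange_big; apply: eq_big_seq => x xX.
  rewrite exchange_big; apply: eq_big_seq => x' _.
  rewrite exchange_big; apply: eq_big_seq => y yY.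
  rewrite exchange_big; apply: eq_big_seq => y' _.
  under eq_bigr => z _ do rewrite [f x y == z]eq_sym.
  by rewrite (sum_eq_mul _ _ (fun z => (f x' y' == z) : nat)) fXY // mul1n eq_sym.
have := @leq_sum_sq_mul _ Z rep (fun=> 1) (fun z => rep z ^ 2)
  (fun z => eq_leq (esym (mul1n _))).
by rewrite sum_rep sum_rep_sq -card_fset_sum1.
Qed.

End FsetCounting.

Section Differences.
Variable G : zmodType.
Implicit Types (A B X Y : {fset G}) (s d u v x y : G).

Lemma subr_eq_subr x y x' y' : (x - y == x' - y')%R = (x + y' == x' + y)%R.
Proof. by rewrite subr_eq -(inj_eq (addIr y')) addrAC subrK. Qed.

Lemma subr_eq_sub x y x' y' : (x - y == x' - y')%R = (x' - x == y' - y)%R.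
Proof. by rewrite !subr_eq_subr addrC eq_sym addrC. Qed.

Lemma addr_eq_add x y x' y' : (x + y == x' + y')%R = (x' - x == y - y')%R.
Proof. by rewrite subr_eq_subr eq_sym addrC [(y + _)%R]addrC. Qed.

Lemma addr_eq u d v : ((u + d)%R == v) = (d == (v - u)%R).
Proof.
by apply/eqP/eqP => [<-|->]; [rewrite (addrC u) addrK | rewrite addrC subrK].
Qed.

Lemma inAsh A s y : (y \in Ash A s) = (y \in A) && ((y + s)%R \in A).
Proof. by rewrite !inE. Qed.

Lemma Ash_subset A s : Ash A s `<=` A.
Proof. by apply/fsubsetP => y; rewrite inAsh => /andP[]. Qed.

Lemma Ash0 A : Ash A 0%R = A.
Proof. by apply/fsetP => y; rewrite inAsh addr0 andbb. Qed.

Lemma AshC A s d : Ash (Ash A s) d = Ash (Ash A d) s.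
Proof.
apply/fsetP => y; rewrite !inAsh (addrAC y d s).
by case: (y \in A); case: (y + s \in A)%R; case: (y + d \in A)%R.
Qed.

Lemma mem_diffset X Y x y : x \in X -> y \in Y -> (x - y)%R \in diffset X Y.
Proof. exact: in_imfset2. Qed.

Lemma card_AshE X d :
  #|` Ash X d| = \sum_(x <- X) \sum_(x' <- X) ((x + d)%R == x').
Proof.
rewrite card_fset_sum1 (eq_big_seq (fun x => (x \in Ash X d) : nat)) => [|x ->] //.
rewrite (big_fset_incl _ (Ash_subset X d)) => [|x _ /negbTE -> //].
apply: eq_big_seq => x xX; rewrite inAsh xX -sum_eq_mem.
by apply: eq_bigr => x' _; rewrite eq_sym.
Qed.

Lemma sum_diffset_add_eq A u v (F : G -> nat) : u \in A -> v \in A ->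
  \sum_(d <- diffset A A) ((u + d)%R == v) * F d = F (v - u)%R.
Proof.
move=> uA vA; under eq_bigr => d _ do rewrite addr_eq.
by rewrite sum_eq_mul mem_diffset ?mul1n.
Qed.

Lemma energyE A X Y : X `<=` A -> Y `<=` A ->
  \sum_(x <- X) \sum_(x' <- X) \sum_(y <- Y) \sum_(y' <- Y) ((x' - x)%R == (y' - y)%R) =
  \sum_(d <- diffset A A) #|` Ash X d| * #|` Ash Y d|.
Proof.
move=> sXA sYA; symmetry.
transitivity (\sum_(d <- diffset A A) \sum_(x <- X) \sum_(x' <- X) \sum_(y <- Y)
    \sum_(y' <- Y) ((x + d)%R == x') * ((y + d)%R == y')).
  apply: eq_bigr => d _; rewrite !card_AshE big_distrlr; apply: eq_bigr => x _.
  by under eq_bigr do rewrite big_distrlr; rewrite exchange_big.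
rewrite exchange_big; apply: eq_big_seq => x xX.
rewrite exchange_big; apply: eq_big_seq => x' x'X.
rewrite exchange_big; apply: eq_big_seq => y _.
rewrite exchange_big; apply: eq_big_seq => y' _.
rewrite (@sum_diffset_add_eq A x x' (fun d => ((y + d)%R == y') : nat)) ?(fsubsetP sXA) //.
by rewrite addr_eq.
Qed.

Lemma card_diffset_sq_le A X Y : X `<=` A -> Y `<=` A ->
  (#|` X| * #|` Y|) ^ 2 <=
    #|` diffset X Y| * \sum_(d <- diffset A A) #|` Ash X d| * #|` Ash Y d|.
Proof.
move=> sXA sYA; rewrite -(energyE sXA sYA).
apply: leq_trans (card_imfset2_sq_le (fun x y => (x - y)%R) X Y) _.
rewrite leq_mul2l; apply/orP; right; apply/eq_leq.
apply: eq_bigr => x _; apply: eq_bigr => x' _.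
by apply: eq_bigr => y _; apply: eq_bigr => y' _; rewrite (subr_eq_sub x y).
Qed.

Lemma card_sumset_sq_le A X Y : X `<=` A -> Y `<=` A ->
  (#|` X| * #|` Y|) ^ 2 <=
    #|` sumset X Y| * \sum_(d <- diffset A A) #|` Ash X d| * #|` Ash Y d|.
Proof.
move=> sXA sYA; rewrite -(energyE sXA sYA).
apply: leq_trans (card_imfset2_sq_le (fun x y => (x + y)%R) X Y) _.
rewrite leq_mul2l; apply/orP; right; apply/eq_leq.
apply: eq_bigr => x _; apply: eq_bigr => x' _; rewrite exchange_big.
by apply: eq_bigr => y _; apply: eq_bigr => y' _; rewrite (addr_eq_add x y').
Qed.

End Differences.

Lemma sqn_subn n : n ^ 2 - n = n * n.-1.
Proof. by case: n => // n; rewrite -mulnn mulnSr addnK. Qed.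

Lemma mul_sqn_subn_le c n : c <= n -> n * (c ^ 2 - c) <= (n - 1) * c ^ 2.
Proof.
move=> cn; rewrite sqn_subn -mulnn mulnCA [_ * (c * c)]mulnCA leq_mul2l -subn1.
by rewrite mulnBr mulnBl muln1 mul1n leq_sub2l ?orbT.
Qed.

Lemma expn6_leq n S W E : 2 <= n -> (n * (n ^ 2 - n)) ^ 2 <= S * W ->
  n * W <= (n - 1) * E -> n ^ 6 <= 2 * S * E.
Proof.
rewrite sqn_subn subn1; case: n => [|[|m]] // _; set k := m.+1 => /= hSW hW.
have h1 : k * (k.+1 ^ 5 * k) <= k * (S * E).
  apply: (@leq_trans (S * (k.+1 * W))); last first.
    by rewrite [k * _]mulnCA leq_mul2l hW orbT.
  rewrite [S * _]mulnCA (leq_trans _ (leq_mul (leqnn _) hSW)) //.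
  by apply/eq_leq; rewrite /k; nia.
rewrite leq_pmul2l // in h1; rewrite -mulnA (leq_trans _ (leq_mul (leqnn 2) h1)) //.
by rewrite expnSr mulnCA; apply: leq_mul => //; rewrite /k; lia.
Qed.

Lemma expn8_leq n T V E : 2 <= n -> ((n ^ 2 - n) ^ 2) ^ 2 <= T * V ->
  n ^ 2 * V <= (n - 1) ^ 2 * E -> n ^ 8 <= 4 * T * E.
Proof.
rewrite sqn_subn subn1; case: n => [|[|m]] // _; set k := m.+1 => /= hTV hV.
have h1 : k ^ 2 * (k.+1 ^ 6 * k ^ 2) <= k ^ 2 * (T * E).
  apply: (@leq_trans (T * (k.+1 ^ 2 * V))); last first.
    by rewrite [k ^ 2 * _]mulnCA leq_mul2l hV orbT.
  rewrite [T * _]mulnCA (leq_trans _ (leq_mul (leqnn _) hTV)) //.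
  by apply/eq_leq; rewrite /k; nia.
rewrite leq_pmul2l ?expn_gt0 // in h1; rewrite -mulnA (leq_trans _ (leq_mul (leqnn 4) h1)) //.
rewrite (_ : 8 = (6 + 2)%N) // expnD mulnCA; apply: leq_mul => //.
by rewrite -!mulnn -[4]/(2 * 2) mulnACA; apply: leq_mul; rewrite /k; lia.
Qed.

Lemma exists_sum_le_size_mul (I : eqType) (r : seq I) (F : I -> nat) :
  0 < size r -> exists2 i, i \in r & \sum_(j <- r) F j <= size r * F i.
Proof.
elim: r => // a [|b r] IH _; first by exists a; rewrite ?mem_seq1 // big_seq1 mul1n.
have [i ir hi] := IH isT.
have [Fai | Fia] := leqP (F a) (F i).
  exists i; first by rewrite inE ir orbT.
  by rewrite big_cons mulSn leq_add.
exists a; first exact: mem_head.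
by rewrite big_cons mulSn leq_add2l (leq_trans hi) // leq_mul2l ltnW ?orbT.
Qed.

Section RationalBounds.
Local Open Scope ring_scope.
Variable R : numFieldType.

Lemma exists_ge_mean (I : eqType) (r : seq I) (F : I -> nat) (x : R) (D : nat) :
  (0 < size r)%N -> (size r <= D)%N -> x <= \sum_(i <- r) (F i)%:R ->
  exists2 i, i \in r & x / D%:R <= (F i)%:R.
Proof.
move=> r_gt0 rD xF; have [i ir hi] := exists_sum_le_size_mul F r_gt0.
exists i => //; rewrite ler_pdivrMr ?ltr0n ?(leq_trans r_gt0) //.
rewrite (le_trans xF) // -natr_sum -natrM ler_nat mulnC (leq_trans hi) //.
by rewrite leq_mul2r rD orbT.
Qed.

Lemma ratio_le_natr (m n k S E : nat) : (0 < m)%N ->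
  (n ^ k <= m * S * E)%N -> m%:R^-1 * n%:R ^+ k / E%:R <= (S%:R : R).
Proof.
move=> m_gt0 h; have [->|E_gt0] := posnP E; first by rewrite invr0 mulr0.
rewrite ler_pdivrMr ?ltr0n // mulrC ler_pdivrMr ?ltr0n //.
by rewrite -natrX -!natrM ler_nat mulnC mulnA.
Qed.

Lemma exists_ge_mean2 (I : eqType) (r : seq I) (F : I -> I -> nat) (x : R) (D : nat) :
  (0 < size r)%N -> (size r <= D)%N -> x <= \sum_(i <- r) \sum_(j <- r) (F i j)%:R ->
  exists i j, [/\ i \in r, j \in r & x / D%:R ^+ 2 <= (F i j)%:R].
Proof.
move=> r_gt0 rD xF; pose P := [seq (i, j) | i <- r, j <- r].
have P_gt0 : (0 < size P)%N by rewrite size_allpairs muln_gt0 r_gt0.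
have P_le : (size P <= D ^ 2)%N by rewrite size_allpairs -mulnn leq_mul.
have xP : x <= \sum_(p <- P) (F p.1 p.2)%:R by rewrite big_allpairs.
have [[i j] /allpairsP[[i' j'] [/= ir jr [-> ->]]]] := exists_ge_mean P_gt0 P_le xP.
by rewrite natrX => h; exists i', j'.
Qed.

End RationalBounds.

Section NonzeroDifferences.
Variables (G : zmodType) (A : {fset G}).
Implicit Types (B : {fset G}) (s t d : G).

Lemma sum_card_Ash B : B `<=` A -> \sum_(d <- diffset A A) #|` Ash B d| = #|` B| ^ 2.
Proof.
move=> sBA; under eq_bigr => d _ do rewrite card_AshE.
rewrite exchange_big -mulnn [X in _ = X * _]card_fset_sum1 big_distrl /=.
apply: eq_big_seq => b bB; rewrite exchange_big mul1n card_fset_sum1.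
apply: eq_big_seq => b' b'B; under eq_bigr do rewrite addr_eq.
by rewrite sum_eq_mem mem_diffset ?(fsubsetP sBA).
Qed.

Lemma sum_nzdiff_card_Ash B : 0 < #|` A| -> B `<=` A ->
  \sum_(s <- nzdiff A) #|` Ash B s| = #|` B| ^ 2 - #|` B|.
Proof.
rewrite cardfs_gt0 => /fset0Pn [a aA] sBA.
have A0 : (0 : G)%R \in diffset A A by rewrite -(subrr a) mem_diffset.
by rewrite -(sum_card_Ash sBA) [in RHS](big_fsetD1 0%R) //= Ash0 addKn.
Qed.

Lemma sum_nzdiff_energy_Ash : 0 < #|` A| ->
  \sum_(s <- nzdiff A) \sum_(d <- diffset A A) #|` Ash A d| * #|` Ash (Ash A s) d| =
  \sum_(d <- diffset A A) #|` Ash A d| * (#|` Ash A d| ^ 2 - #|` Ash A d|).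
Proof.
move=> A_gt0; rewrite exchange_big; apply: eq_bigr => d _.
by under eq_bigr do rewrite AshC; rewrite -big_distrr sum_nzdiff_card_Ash ?Ash_subset.
Qed.

Lemma sum_nzdiff2_energy_Ash : 0 < #|` A| ->
  \sum_(s <- nzdiff A) \sum_(t <- nzdiff A) \sum_(d <- diffset A A)
     #|` Ash (Ash A s) d| * #|` Ash (Ash A t) d| =
  \sum_(d <- diffset A A) (#|` Ash A d| ^ 2 - #|` Ash A d|) ^ 2.
Proof.
move=> A_gt0; under eq_bigr do rewrite exchange_big; rewrite exchange_big.
apply: eq_bigr => d _; under eq_bigr do under eq_bigr do rewrite !(AshC A _ d).
by rewrite -big_distrlr sum_nzdiff_card_Ash ?Ash_subset // mulnn.
Qed.

Lemma card_nzdiff_gt0 : 1 < #|` A| -> 0 < #|` nzdiff A|.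
Proof.
move=> hA; have /fset0Pn [a aA] : A != fset0 by rewrite -cardfs_gt0 ltnW.
have /fset0Pn [b] : A `\ a != fset0.
  by move: hA; rewrite (cardfsD1 a) aA add1n ltnS cardfs_gt0.
rewrite in_fsetD1 => /andP [ba bA]; rewrite cardfs_gt0; apply/fset0Pn.
by exists (b - a)%R; rewrite in_fsetD1 subr_eq0 ba mem_diffset.
Qed.

Lemma E3_lower_bound (R : numFieldType) (X : G -> {fset G}) : 1 < #|` A| ->
  (forall s, (#|` A| * #|` Ash A s|) ^ 2 <=
     #|` X s| * \sum_(d <- diffset A A) #|` Ash A d| * #|` Ash (Ash A s) d|) ->
  (2^-1 * (#|` A|)%:R ^+ 6 / (E3 A)%:R <= \sum_(s <- nzdiff A) (#|` X s|)%:R :> R)%R.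
Proof.
move=> hA hX; have A_gt0 := ltnW hA; rewrite -natr_sum; apply: ratio_le_natr => //.
pose W := \sum_(d <- diffset A A) #|` Ash A d| * (#|` Ash A d| ^ 2 - #|` Ash A d|).
apply: (expn6_leq hA (W := W)).
  have := leq_sum_sq_mul (nzdiff A) hX.
  by rewrite -big_distrr sum_nzdiff_card_Ash // sum_nzdiff_energy_Ash.
rewrite /E3 /conv !big_distrr; apply: leq_sum => d _ /=.
rewrite mulnCA [_ ^ 3]expnS [(_ - 1) * _]mulnCA leq_mul2l.
by rewrite mul_sqn_subn_le ?orbT // fsubset_leq_card ?Ash_subset.
Qed.

Lemma E4_lower_bound (R : numFieldType) (X : G -> G -> {fset G}) : 1 < #|` A| ->
  (forall s t, (#|` Ash A s| * #|` Ash A t|) ^ 2 <=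
     #|` X s t| * \sum_(d <- diffset A A) #|` Ash (Ash A s) d| * #|` Ash (Ash A t) d|) ->
  (4^-1 * (#|` A|)%:R ^+ 8 / (E4 A)%:R <=
     \sum_(s <- nzdiff A) \sum_(t <- nzdiff A) (#|` X s t|)%:R :> R)%R.
Proof.
move=> hA hX; have A_gt0 := ltnW hA.
under eq_bigr do rewrite -natr_sum; rewrite -natr_sum; apply: ratio_le_natr => //.
apply: (expn8_leq hA (V := \sum_(d <- diffset A A) (#|` Ash A d| ^ 2 - #|` Ash A d|) ^ 2)).
  pose r := [seq (s, t) | s <- nzdiff A, t <- nzdiff A].
  have := leq_sum_sq_mul r (fun p => hX p.1 p.2).
  rewrite !big_allpairs /= -sum_nzdiff2_energy_Ash // -big_distrlr.
  by rewrite sum_nzdiff_card_Ash // mulnn.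
rewrite /E4 /conv !big_distrr; apply: leq_sum => d _ /=.
rewrite (_ : 4 = 2 * 2) // expnM -!expnMn leq_exp2r //.
by rewrite mul_sqn_subn_le // fsubset_leq_card ?Ash_subset.
Qed.

End NonzeroDifferences.


Local Open Scope ring_scope.

Theorem corollary3p2 (G : zmodType) (A : {fset G}) (hA : (2 <= #|` A|)%N) :
  [/\ (\sum_(s <- nzdiff A) (#|` diffset A (Ash A s)|)%:R : rat)
        >= 2^-1 * (#|` A|)%:R ^+ 6 / (E3 A)%:R,
      (\sum_(s <- nzdiff A) (#|` sumset A (Ash A s)|)%:R : rat)
        >= 2^-1 * (#|` A|)%:R ^+ 6 / (E3 A)%:R,
      (\sum_(s <- nzdiff A) \sum_(t <- nzdiff A)
          (#|` diffset (Ash A s) (Ash A t)|)%:R : rat)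
        >= 4^-1 * (#|` A|)%:R ^+ 8 / (E4 A)%:R
    & (\sum_(s <- nzdiff A) \sum_(t <- nzdiff A)
          (#|` sumset (Ash A s) (Ash A t)|)%:R : rat)
        >= 4^-1 * (#|` A|)%:R ^+ 8 / (E4 A)%:R] /\
  ((exists2 s, s \in nzdiff A &
          ((#|` diffset A (Ash A s)|)%:R
            >= 2^-1 * (#|` A|)%:R ^+ 6 / (E3 A)%:R / (#|` diffset A A|)%:R :> rat)) /\
     (exists s, exists t, [/\ s \in nzdiff A, t \in nzdiff A &
          ((#|` diffset (Ash A s) (Ash A t)|)%:R
            >= 4^-1 * (#|` A|)%:R ^+ 8 / (E4 A)%:R
                 / (#|` diffset A A|)%:R ^+ 2 :> rat)])).
Proof.
have nz_gt0 := card_nzdiff_gt0 hA.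
have nz_le : (#|` nzdiff A| <= #|` diffset A A|)%N := fsubset_leq_card (fsubsetDl _ _).
have E3_diff := E3_lower_bound rat hA
  (fun s => card_diffset_sq_le (fsubset_refl A) (Ash_subset A s)).
have E4_diff := E4_lower_bound rat hA
  (fun s t => card_diffset_sq_le (Ash_subset A s) (Ash_subset A t)).
split; first split => //.
- exact: E3_lower_bound hA (fun s => card_sumset_sq_le (fsubset_refl A) (Ash_subset A s)).
- exact: E4_lower_bound hA (fun s t => card_sumset_sq_le (Ash_subset A s) (Ash_subset A t)).
split; first exact: exists_ge_mean nz_gt0 nz_le E3_diff.
exact: exists_ge_mean2 nz_gt0 nz_le E4_diff.
Qed.
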